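(* Let $(S,* )$ be a free binary system (free magma) generated by a nonempty set $I$. Then there is no mean $\mu$ on $S$ which is idempotent, i.e. there is no mean $\mu$ on $S$ with $\mu * \mu = \mu$.
   Context: A binary system (magma) is a nonempty set equipped with a binary operation. A mean on a set $S$ is a linear functional $\mu \in \ell^\infty(S)^*$ with $\mu(\chi_S) = 1$ and $\mu(f) \geq 0$ whenever $f \geq 0$; means are identified with finitely additive probability measures on all subsets of $S$ (writing $\mu(A) = \mu(\chi_A)$, and $\int f\,d\mu = \mu(f)$). If $(S,* )$ is a binary system, the operation is extended to means on $S$ by $(\mu * \nu)(f) = \int \left( \int f(s * t)\, d\nu(t) \right) d\mu(s)$ for $f \in \ell^\infty(S)$; that is, $(\mu*\nu)(f) = \mu(g)$ where $g(s) = \nu(t \mapsto f(s*t))$. *)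

From Stdlib Require Import Reals.
Open Scope R_scope.

Inductive fmagma (I : Type) : Type :=
  | Gen : I -> fmagma I
  | Node : fmagma I -> fmagma I -> fmagma I.
Arguments Gen {I} _.
Arguments Node {I} _ _.

Definition fmul {I : Type} (s t : fmagma I) : fmagma I := Node s t.

Definition bounded_fun {S : Type} (f : S -> R) : Prop :=
  exists M : R, forall s, Rabs (f s) <= M.

(* A mean on S: a linear functional on l^infty(S), positive, with mu(chi_S) = 1.
   The functional is represented as a map (S -> R) -> R whose values on
   unbounded functions are irrelevant (all conditions only concern bounded_fun f). *)
Definition is_mean {S : Type} (mu : (S -> R) -> R) : Prop :=
  (forall f g, bounded_fun f -> bounded_fun g -> mu (fun s => f s + g s) = mu f + mu g) /\
  (forall (c : R) f, bounded_fun f -> mu (fun s => c * f s) = c * mu f) /\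
  (forall f, bounded_fun f -> (forall s, 0 <= f s) -> 0 <= mu f) /\
  mu (fun _ => 1) = 1.

Definition mean_conv {S : Type} (op : S -> S -> S) (mu nu : (S -> R) -> R)
  : (S -> R) -> R :=
  fun f => mu (fun s => nu (fun t => f (op s t))).

(** An idempotent mean satisfies [mu A = mu (s |-> mu {t | s t \in A})]; so if
    the preimage of [A] under the operation is a rectangle [B x C], then
    [mu A = mu B * mu C].  As [{depth <= n + 1}] pulls back to
    [{depth <= n} x {depth <= n}], sets of bounded depth are null.  The rank
    [rho] is designed so that [{rho = n + 1}] pulls back to
    [{depth > n} x {rho = n}]: all level sets of [rho] then have equal mass,
    and being disjoint they are null.  Yet the [s]-section of the preimage of
    [{rho = 0}] is [{rho >= depth s}], the complement of finitely many level
    sets, so [{rho = 0}] has full mass. *)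

From Stdlib Require Import Reals Bool Lra Lia FunctionalExtensionality.
Open Scope R_scope.

Definition indic {T : Type} (b : T -> bool) : T -> R :=
  fun x => if b x then 1 else 0.

Lemma bounded_indic {T : Type} (b : T -> bool) : bounded_fun (indic b).
Proof.
  exists 1; intro x; unfold indic; destruct (b x).
  - rewrite Rabs_R1; lra.
  - rewrite Rabs_R0; lra.
Qed.

Lemma archimedean_bounded_multiples_0 (p : R) :
  0 <= p -> (forall n, INR n * p <= 1) -> p = 0.
Proof.
  intros Hp Hbound.
  destruct (Rle_lt_or_eq_dec _ _ Hp) as [Hpos | Hzero]; [exfalso | auto].
  destruct (INR_unbounded (/ p)) as [M HM].
  apply (Rmult_lt_compat_r p) in HM; [| exact Hpos].
  rewrite Rinv_l in HM by lra.
  specialize (Hbound M); lra.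
Qed.

Section Means.

Variables (T : Type) (mu : (T -> R) -> R).
Hypothesis mean_mu : is_mean mu.

Lemma mean_ext (f g : T -> R) : (forall x, f x = g x) -> mu f = mu g.
Proof. intro Hfg; f_equal; apply functional_extensionality; exact Hfg. Qed.

Lemma mean_const (c : R) : mu (fun _ => c) = c.
Proof.
  destruct mean_mu as [_ [Hscale [_ Hone]]].
  rewrite (mean_ext _ (fun _ => c * 1)) by (intro; ring).
  rewrite Hscale, Hone by (exists 1; intro; rewrite Rabs_R1; lra).
  ring.
Qed.

Lemma mean_indic_false : mu (indic (fun _ => false)) = 0.
Proof. exact (mean_const 0). Qed.

Lemma mean_indic_true : mu (indic (fun _ => true)) = 1.
Proof. exact (mean_const 1). Qed.

Lemma mean_scale_indic (c : R) (b : T -> bool) :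
  mu (fun x => c * indic b x) = c * mu (indic b).
Proof. destruct mean_mu as [_ [Hscale _]]; apply Hscale, bounded_indic. Qed.

Lemma mean_indic_ge0 (b : T -> bool) : 0 <= mu (indic b).
Proof.
  destruct mean_mu as [_ [_ [Hpos _]]].
  apply Hpos; [apply bounded_indic |].
  intro x; unfold indic; destruct (b x); lra.
Qed.

Lemma mean_indic_disjoint_union (b c d : T -> bool) :
  (forall x, b x = c x || d x) -> (forall x, c x && d x = false) ->
  mu (indic b) = mu (indic c) + mu (indic d).
Proof.
  intros Hunion Hdisj.
  destruct mean_mu as [Hadd _].
  rewrite <- Hadd by apply bounded_indic.
  apply mean_ext; intro x; unfold indic.
  specialize (Hunion x); specialize (Hdisj x).
  destruct (c x), (d x); simpl in *; rewrite Hunion; first [lra | discriminate].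
Qed.

Lemma mean_indic_compl (b c : T -> bool) :
  (forall x, c x = negb (b x)) -> mu (indic c) = 1 - mu (indic b).
Proof.
  intro Hc.
  rewrite <- mean_indic_true, (mean_indic_disjoint_union (fun _ => true) b c).
  - ring.
  - intro x; rewrite Hc; destruct (b x); reflexivity.
  - intro x; rewrite Hc; destruct (b x); reflexivity.
Qed.

Lemma mean_indic_le1 (b : T -> bool) : mu (indic b) <= 1.
Proof.
  rewrite (mean_indic_compl (fun x => negb (b x)) b) by
    (intro x; destruct (b x); reflexivity).
  pose proof (mean_indic_ge0 (fun x => negb (b x))); lra.
Qed.

Section LevelSets.

Variable level : T -> nat.

Let mass n := mu (indic (fun x => Nat.eqb (level x) n)).
Let mass_below M := mu (indic (fun x => Nat.ltb (level x) M)).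

Lemma mean_level_below_0 : mass_below 0 = 0.
Proof.
  unfold mass_below; rewrite <- mean_indic_false.
  apply mean_ext; intro x; unfold indic.
  destruct (Nat.ltb_spec (level x) 0); [lia | reflexivity].
Qed.

Lemma mean_level_below_S M : mass_below (S M) = mass_below M + mass M.
Proof.
  apply mean_indic_disjoint_union; intro x.
  - destruct (Nat.ltb_spec (level x) (S M)), (Nat.ltb_spec (level x) M),
      (Nat.eqb_spec (level x) M); simpl; first [reflexivity | lia].
  - destruct (Nat.ltb_spec (level x) M), (Nat.eqb_spec (level x) M);
      simpl; first [reflexivity | lia].
Qed.

Lemma mean_level_below_null :
  (forall n, mass n = 0) -> forall M, mass_below M = 0.
Proof.
  intros Hnull M; induction M as [| M IH].
  - apply mean_level_below_0.
  - rewrite mean_level_below_S, IH, Hnull; ring.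
Qed.

Lemma mean_level_shift_invariant_null :
  (forall n, mass (S n) = mass n) -> forall n, mass n = 0.
Proof.
  intro Hshift.
  assert (Hconst : forall n, mass n = mass 0%nat)
    by (induction n as [| n IH]; [reflexivity | rewrite Hshift; exact IH]).
  assert (Hbelow : forall M, mass_below M = INR M * mass 0%nat).
  { induction M as [| M IH].
    - rewrite mean_level_below_0; simpl; ring.
    - rewrite mean_level_below_S, IH, (Hconst M), S_INR; ring. }
  assert (Hmass0 : mass 0%nat = 0).
  { apply archimedean_bounded_multiples_0; [apply mean_indic_ge0 |].
    intro M; rewrite <- Hbelow; apply mean_indic_le1. }
  intro n; rewrite Hconst; exact Hmass0.
Qed.

End LevelSets.

End Means.

Section IdempotentMeans.

Variables (T : Type) (op : T -> T -> T) (mu : (T -> R) -> R).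
Hypothesis mean_mu : is_mean mu.
Hypothesis idem_mu : forall f, bounded_fun f -> mean_conv op mu mu f = mu f.

Lemma idem_indic (b : T -> bool) :
  mu (indic b) = mu (fun s => mu (indic (fun t => b (op s t)))).
Proof. symmetry; exact (idem_mu _ (bounded_indic b)). Qed.

Lemma idem_indic_mul (b c d : T -> bool) :
  (forall s t, b (op s t) = c s && d t) ->
  mu (indic b) = mu (indic c) * mu (indic d).
Proof.
  intro Hb; rewrite idem_indic.
  rewrite (mean_ext _ mu _ (fun s => mu (indic d) * indic c s)).
  - rewrite mean_scale_indic by exact mean_mu; ring.
  - intro s; rewrite Rmult_comm, <- mean_scale_indic by exact mean_mu.
    apply mean_ext; intro t; unfold indic; rewrite Hb.
    destruct (c s), (d t); simpl; ring.
Qed.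

End IdempotentMeans.

Fixpoint depth {I : Type} (x : fmagma I) : nat :=
  match x with
  | Gen _ => 0
  | Node s t => S (Nat.max (depth s) (depth t))
  end.

Fixpoint rho {I : Type} (x : fmagma I) : nat :=
  match x with
  | Gen _ => 0
  | Node s t => if Nat.ltb (rho t) (depth s) then S (rho t) else 0
  end.

Lemma depth_Node_lt {I : Type} (s t : fmagma I) (n : nat) :
  Nat.ltb (depth (Node s t)) (S n) = Nat.ltb (depth s) n && Nat.ltb (depth t) n.
Proof.
  simpl depth.
  destruct (Nat.ltb_spec (S (Nat.max (depth s) (depth t))) (S n)),
    (Nat.ltb_spec (depth s) n), (Nat.ltb_spec (depth t) n);
    simpl; first [reflexivity | lia].
Qed.

Lemma rho_Node_eq_S {I : Type} (s t : fmagma I) (n : nat) :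
  Nat.eqb (rho (Node s t)) (S n) = Nat.ltb n (depth s) && Nat.eqb (rho t) n.
Proof.
  simpl rho.
  destruct (Nat.ltb_spec (rho t) (depth s)), (Nat.ltb_spec n (depth s)),
    (Nat.eqb_spec (rho t) n); simpl;
    first [reflexivity | apply Nat.eqb_eq; lia | apply Nat.eqb_neq; lia | lia].
Qed.

Lemma rho_Node_eq_0 {I : Type} (s t : fmagma I) :
  Nat.eqb (rho (Node s t)) 0 = negb (Nat.ltb (rho t) (depth s)).
Proof. simpl rho; destruct (Nat.ltb (rho t) (depth s)); reflexivity. Qed.

Section IdempotentMeanOnFreeMagma.

Variables (I : Type) (mu : (fmagma I -> R) -> R).
Hypothesis mean_mu : is_mean mu.
Hypothesis idem_mu : forall f, bounded_fun f -> mean_conv fmul mu mu f = mu f.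

Lemma idem_depth_lt_null n : mu (indic (fun x => Nat.ltb (depth x) n)) = 0.
Proof.
  induction n as [| n IH].
  - exact (mean_level_below_0 _ mu mean_mu depth).
  - rewrite (idem_indic_mul _ fmul mu mean_mu idem_mu _ _ _ (fun s t => depth_Node_lt s t n)).
    rewrite IH; ring.
Qed.

Lemma idem_depth_gt_full n : mu (indic (fun x => Nat.ltb n (depth x))) = 1.
Proof.
  rewrite (mean_indic_compl _ mu mean_mu (fun x => Nat.ltb (depth x) (S n))).
  - rewrite idem_depth_lt_null; ring.
  - intro x; destruct (Nat.ltb_spec n (depth x)), (Nat.ltb_spec (depth x) (S n));
      simpl; first [reflexivity | lia].
Qed.

Lemma idem_rho_level_null n : mu (indic (fun x => Nat.eqb (rho x) n)) = 0.
Proof.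
  apply (mean_level_shift_invariant_null _ mu mean_mu rho); intro m.
  rewrite (idem_indic_mul _ fmul mu mean_mu idem_mu _ _ _ (fun s t => rho_Node_eq_S s t m)).
  rewrite idem_depth_gt_full; ring.
Qed.

Lemma idem_rho_0_full : mu (indic (fun x => Nat.eqb (rho x) 0)) = 1.
Proof.
  rewrite (idem_indic _ fmul mu idem_mu).
  rewrite <- (mean_const _ mu mean_mu 1).
  apply mean_ext; intro s.
  rewrite (mean_indic_compl _ mu mean_mu (fun t => Nat.ltb (rho t) (depth s)))
    by (intro t; apply rho_Node_eq_0).
  rewrite (mean_level_below_null _ mu mean_mu rho idem_rho_level_null); ring.
Qed.

End IdempotentMeanOnFreeMagma.

Theorem mainTheorem1 (I : Type) (i0 : I) :
  ~ exists mu : (fmagma I -> R) -> R,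
      is_mean mu /\
      (forall f : fmagma I -> R, bounded_fun f -> mean_conv fmul mu mu f = mu f).
Proof.
  intros [mu [mean_mu idem_mu]].
  pose proof (idem_rho_0_full I mu mean_mu idem_mu) as Hfull.
  rewrite (idem_rho_level_null I mu mean_mu idem_mu 0) in Hfull.
  lra.
Qed.
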